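(* Over the family of 3-periodics of $E$: (i) the locus of the barycenter $X_2$ (triangle center function $h=1/s_1$) is the ellipse $x^2/(k_2a)^2+y^2/(k_2b)^2=1$ with $k_2=\dfrac{2\delta-a^2-b^2}{3c^2}$; (ii) the locus of the Gergonne point $X_7$ ($h=\dfrac{1}{s_1(s_2+s_3-s_1)}$) is the ellipse $x^2/(k_7a)^2+y^2/(k_7b)^2=1$ with $k_7=\dfrac{2\delta-a^2-b^2}{c^2}$; (iii) the locus of $X_{57}$ ($h=\dfrac{1}{s_2+s_3-s_1}$) is the ellipse $x^2/(k_{57}a)^2+y^2/(k_{57}b)^2=1$ with $k_{57}=\dfrac{c^2}{\delta}$. In particular each of these loci is an ellipse similar to $E$ (concentric and axis-aligned with it).
   Context: Fix real numbers $a>b>0$, let $E$ be the ellipse $x^2/a^2+y^2/b^2=1$, $c^2=a^2-b^2$ and $\delta=\sqrt{a^4-a^2b^2+b^4}$. A 3-periodic is a non-degenerate triangle $P_1P_2P_3$ with all vertices on $E$ such that at each vertex $P_j$ the normal line to $E$ at $P_j$ bisects the interior angle of the triangle at $P_j$. For a triangle let $s_1=|P_2P_3|$, $s_2=|P_3P_1|$, $s_3=|P_1P_2|$. Given a triangle center function $h(s_1,s_2,s_3)$, the center $X_h$ is the point with trilinears $p:q:r=h(s_1,s_2,s_3):h(s_2,s_3,s_1):h(s_3,s_1,s_2)$, i.e. the Cartesian point $\dfrac{p s_1P_1+q s_2P_2+r s_3P_3}{p s_1+q s_2+r s_3}$. The locus of $X_h$ is the set of points $X_h(T)$ over all 3-periodics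 $T$. *)

From Stdlib Require Import Reals Lra.
Open Scope R_scope.

Definition pt := (R * R)%type.

Definition padd (P Q : pt) : pt := (fst P + fst Q, snd P + snd Q).
Definition psub (P Q : pt) : pt := (fst P - fst Q, snd P - snd Q).
Definition pscale (k : R) (P : pt) : pt := (k * fst P, k * snd P).
Definition cross (u v : pt) : R := fst u * snd v - snd u * fst v.
Definition dist (P Q : pt) : R :=
  sqrt ((fst P - fst Q) ^ 2 + (snd P - snd Q) ^ 2).

Definition on_ellipse (a b : R) (P : pt) : Prop :=
  fst P ^ 2 / a ^ 2 + snd P ^ 2 / b ^ 2 = 1.

(* a normal vector to E at P (gradient of x^2/a^2+y^2/b^2, up to factor 2) *)
Definition ell_normal (a b : R) (P : pt) : pt := (fst P / a ^ 2, snd P / b ^ 2).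

Definition unit_to (P Q : pt) : pt := pscale (/ dist P Q) (psub Q P).

(* The normal line to E at P bisects the interior angle QPR of triangle PQR:
   the normal direction is parallel to the interior bisector direction
   (unit vector PQ) + (unit vector PR). *)
Definition normal_bisects (a b : R) (P Q S : pt) : Prop :=
  cross (ell_normal a b P) (padd (unit_to P Q) (unit_to P S)) = 0.

Definition nondegenerate (P1 P2 P3 : pt) : Prop :=
  cross (psub P2 P1) (psub P3 P1) <> 0.

Definition three_periodic (a b : R) (P1 P2 P3 : pt) : Prop :=
  nondegenerate P1 P2 P3 /\
  on_ellipse a b P1 /\ on_ellipse a b P2 /\ on_ellipse a b P3 /\
  normal_bisects a b P1 P2 P3 /\
  normal_bisects a b P2 P3 P1 /\
  normal_bisects a b P3 P1 P2.

(* triangle center X_h with trilinears h(s1,s2,s3):h(s2,s3,s1):h(s3,s1,s2) *)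
Definition center (h : R -> R -> R -> R) (P1 P2 P3 : pt) : pt :=
  let s1 := dist P2 P3 in
  let s2 := dist P3 P1 in
  let s3 := dist P1 P2 in
  let p := h s1 s2 s3 in
  let q := h s2 s3 s1 in
  let r := h s3 s1 s2 in
  pscale (/ (p * s1 + q * s2 + r * s3))
    (padd (pscale (p * s1) P1) (padd (pscale (q * s2) P2) (pscale (r * s3) P3))).

Definition in_locus (a b : R) (h : R -> R -> R -> R) (X : pt) : Prop :=
  exists P1 P2 P3, three_periodic a b P1 P2 P3 /\ center h P1 P2 P3 = X.

Definition h2 (s1 s2 s3 : R) : R := / s1.
Definition h7 (s1 s2 s3 : R) : R := / (s1 * (s2 + s3 - s1)).
Definition h57 (s1 s2 s3 : R) : R := / (s2 + s3 - s1).

Definition csq (a b : R) : R := a ^ 2 - b ^ 2.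
Definition delta (a b : R) : R := sqrt (a ^ 4 - a ^ 2 * b ^ 2 + b ^ 4).
Definition k2 (a b : R) : R := (2 * delta a b - a ^ 2 - b ^ 2) / (3 * csq a b).
Definition k7 (a b : R) : R := (2 * delta a b - a ^ 2 - b ^ 2) / csq a b.
Definition k57 (a b : R) : R := csq a b / delta a b.

Definition on_scaled_ellipse (k a b : R) (X : pt) : Prop :=
  fst X ^ 2 / (k * a) ^ 2 + snd X ^ 2 / (k * b) ^ 2 = 1.

(* Write the vertices of a 3-periodic as [ell a b z_i] with [z_i] on the unit circle. The
   normal at a vertex bisects its angle iff the two chords from it have the same ratio
   [gap / length], so all three chords share one ratio [m]; this is a symmetric biquadratic
   relation [chord_poly k h z_i z_j = 0] with [k = m^2 c^2]. For three distinct points of the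
   circle it forces them to be the roots of [z^3 + k w z^2 - k z - w] with [w = z1 z2 z3] on the
   circle, and forces [k] to be [k7], the positive root of [k^2 c^2 + 2 k (a^2 + b^2) = 3 c^2].
   Conversely this cubic has three distinct roots on the circle for every such [w], by the
   intermediate value theorem. The three centers are [ell a b] of fixed multiples of
   [z1 + z2 + z3 = - k w], and [- k w] runs over the circle of radius [k]. *)

From Stdlib Require Import Reals Lra Nsatz.
From Coquelicot Require Import Complex.
Open Scope R_scope.

(* [nsatz] over [R] fails on [x ^ n]; unfold powers into products first. *)
Ltac nsatz_pow :=
  repeat match goal with H : _ |- _ => progress (simpl pow in H) end; simpl pow; nsatz.

#[global] Instance C_ring_ops :
  @Ring_ops C (RtoC 0) (RtoC 1) Cplus Cmult Cminus Copp (@eq C) := {}.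

#[global] Instance C_ring : Ring (Ro := C_ring_ops).
Proof.
  constructor; cbv [Proper respectful eq_notation add_notation mul_notation opp_notation
    zero_notation one_notation equality addition multiplication opposite zero one C_ring_ops];
    try (constructor; red; intros; subst; reflexivity);
    intros; subst; try reflexivity; ring.
Defined.

#[global] Instance C_cring : Cring (Rr := C_ring).
Proof.
  red; intros; cbv [eq_notation add_notation mul_notation opp_notation zero_notation
    one_notation equality addition multiplication opposite zero one C_ring_ops]; ring.
Defined.

#[global] Instance C_integral_domain : Integral_domain (Rcr := C_cring).
Proof.
  constructor.
  - intros x y Hxy; cbv [eq_notation mul_notation zero_notation equality multiplication zero
      C_ring_ops] in *.
    destruct (Ceq_dec x 0) as [->|Hx]; [now left|right].
    replace y with (x * y / x)%C by (field; exact Hx). rewrite Hxy. field. exact Hx.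
  - intro H; apply RtoC_inj in H; lra.
Defined.

Lemma Cminus_inv_witness (z w : C) : z <> w -> exists i, ((z - w) * i = 1%R)%C.
Proof.
  intro Hzw. exists (/ (z - w))%C. apply Cinv_r. intro e. apply Hzw.
  replace z with (z - w + w)%C by ring. rewrite e. ring.
Qed.

Section ComplexIdentities.
Local Open Scope C_scope.

(* Complex form of the relation between two vertices of a 3-periodic, see
   [chord_poly_eq0_iff]. *)
Definition chord_poly (k h z w : C) : C := z*z + w*w - k*(z*z*w*w + 1) - h*z*w.

(* [z1, z2, z3] are the roots of [cubic k (z1 z2 z3)]. *)
Definition vieta_triple (k : R) (z1 z2 z3 : C) : Prop :=
  z1 + z2 + z3 + k*(z1*z2*z3) = 0 /\ z1*z2 + z1*z3 + z2*z3 + k = 0.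

Definition cubic (k : R) (w z : C) : C := z*z*z + k*w*z*z - k*z - w.

Lemma chord_poly_vieta (k h z1 z2 z3 : C) : z1 <> z2 -> z1 <> z3 -> z2 <> z3 ->
  chord_poly k h z1 z2 = 0 -> chord_poly k h z1 z3 = 0 -> chord_poly k h z2 z3 = 0 ->
  z1 + z2 + z3 + k*(z1*z2*z3) = 0 /\ 1 + h + k*(z1*z2 + z1*z3 + z2*z3) = 0.
Proof.
  intros n12 n13 n23; unfold chord_poly; intros.
  destruct (Cminus_inv_witness _ _ n12), (Cminus_inv_witness _ _ n13),
    (Cminus_inv_witness _ _ n23).
  split; nsatz.
Qed.

Lemma vieta_chord_poly (k : R) (h z1 z2 z3 : C) : z1 <> 0%R -> z2 <> 0%R -> z3 <> 0%R ->
  vieta_triple k z1 z2 z3 -> k*k = 1 + h ->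
  chord_poly k h z1 z2 = 0 /\ chord_poly k h z1 z3 = 0 /\ chord_poly k h z2 z3 = 0.
Proof.
  intros n1 n2 n3 [? ?]; unfold chord_poly; intros.
  pose proof (Cinv_r _ n1); pose proof (Cinv_r _ n2); pose proof (Cinv_r _ n3).
  repeat split; nsatz.
Qed.

Lemma vieta_of_inverses (k z1 z2 z3 w1 w2 w3 : C) :
  z1*w1 = 1 -> z2*w2 = 1 -> z3*w3 = 1 -> w1 + w2 + w3 + k*(w1*w2*w3) = 0 ->
  z1*z2 + z1*z3 + z2*z3 + k = 0.
Proof. intros; nsatz. Qed.

Lemma cubic_roots_vieta (k : R) (w z1 z2 z3 : C) : z1 <> z2 -> z1 <> z3 -> z2 <> z3 ->
  cubic k w z1 = 0 -> cubic k w z2 = 0 -> cubic k w z3 = 0 ->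
  vieta_triple k z1 z2 z3 /\ z1*z2*z3 = w.
Proof.
  intros n12 n13 n23; unfold cubic, vieta_triple; intros.
  destruct (Cminus_inv_witness _ _ n12), (Cminus_inv_witness _ _ n13),
    (Cminus_inv_witness _ _ n23).
  assert (e3 : z1*z2*z3 = w) by nsatz.
  repeat split; [rewrite e3|..]; nsatz.
Qed.

(* With [w_i = Cconj z_i], [G_i = |z_j - z_k|^2]; on a 3-periodic these are proportional to
   the side lengths (see [side_lengths]), so the two identities compute the weighted sums
   defining the Gergonne point and [X57]. *)
Lemma gergonne_identity (k : R) (z1 z2 z3 w1 w2 w3 G1 G2 G3 : C) :
  z1*w1 = 1 -> z2*w2 = 1 -> z3*w3 = 1 -> vieta_triple k z1 z2 z3 ->
  G1 = (z2 - z3)*(w2 - w3) -> G2 = (z3 - z1)*(w3 - w1) -> G3 = (z1 - z2)*(w1 - w2) ->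
  z1*(G3+G1-G2)*(G1+G2-G3) + z2*(G2+G3-G1)*(G1+G2-G3) + z3*(G2+G3-G1)*(G3+G1-G2)
  = (z1+z2+z3)*((G3+G1-G2)*(G1+G2-G3) + (G2+G3-G1)*(G1+G2-G3) + (G2+G3-G1)*(G3+G1-G2)).
Proof. intros ? ? ? [? ?] -> -> ->; nsatz. Qed.

Lemma x57_identity (k : R) (z1 z2 z3 w1 w2 w3 G1 G2 G3 : C) :
  z1*w1 = 1 -> z2*w2 = 1 -> z3*w3 = 1 -> vieta_triple k z1 z2 z3 ->
  G1 = (z2 - z3)*(w2 - w3) -> G2 = (z3 - z1)*(w3 - w1) -> G3 = (z1 - z2)*(w1 - w2) ->
  (3 + k*k)*(G1*z1*(G3+G1-G2)*(G1+G2-G3) + G2*z2*(G2+G3-G1)*(G1+G2-G3)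
             + G3*z3*(G2+G3-G1)*(G3+G1-G2))
  = 4*(z1+z2+z3)*(G1*(G3+G1-G2)*(G1+G2-G3) + G2*(G2+G3-G1)*(G1+G2-G3)
                  + G3*(G2+G3-G1)*(G3+G1-G2)).
Proof.
  intros ? ? ? [? ?] -> -> ->.
  replace (RtoC 3) with (1 + 1 + 1) by (unfold RtoC, Cplus; f_equal; simpl; ring).
  replace (RtoC 4) with (1 + 1 + 1 + 1) by (unfold RtoC, Cplus; f_equal; simpl; ring).
  nsatz.
Qed.

End ComplexIdentities.

Definition dot (u v : pt) : R := fst u * fst v + snd u * snd v.

Lemma sum_sq_pos (x y : R) : (x, y) <> (0, 0) -> 0 < x ^ 2 + y ^ 2.
Proof.
  intro hxy.
  destruct (Req_dec x 0) as [->|hx].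
  - destruct (Req_dec y 0) as [->|hy]; [contradiction|].
    pose proof (Rsqr_pos_lt y hy); unfold Rsqr in *; nra.
  - pose proof (Rsqr_pos_lt x hx); unfold Rsqr in *; nra.
Qed.

Lemma dist_sym (P Q : pt) : dist P Q = dist Q P.
Proof. unfold dist; f_equal; ring. Qed.

Lemma dist_sq (P Q : pt) : dist P Q ^ 2 = (fst P - fst Q) ^ 2 + (snd P - snd Q) ^ 2.
Proof.
  unfold dist; rewrite <- Rsqr_pow2; apply Rsqr_sqrt.
  apply Rplus_le_le_0_compat; apply pow2_ge_0.
Qed.

Lemma dist_pos (P Q : pt) : P <> Q -> 0 < dist P Q.
Proof.
  intro hPQ; unfold dist; apply sqrt_lt_R0, sum_sq_pos.
  intro e; injection e; intros; apply hPQ.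
  destruct P, Q; simpl in *; f_equal; lra.
Qed.

Lemma lagrange_identity (n u : pt) :
  dot n u ^ 2 + cross n u ^ 2 = dot n n * dot u u.
Proof. unfold dot, cross; ring. Qed.

Lemma dot_cross_identity (n u v : pt) :
  dot n n * cross u v = dot n u * cross n v - dot n v * cross n u.
Proof. unfold dot, cross; ring. Qed.

Lemma dot_unit_to (n P Q : pt) : dot n (unit_to P Q) = dot n (psub Q P) / dist P Q.
Proof. unfold dot, unit_to, pscale, psub; simpl; unfold Rdiv; ring. Qed.

Lemma unit_to_norm (P Q : pt) : P <> Q -> dot (unit_to P Q) (unit_to P Q) = 1.
Proof.
  intro hPQ; pose proof (dist_pos P Q hPQ).
  unfold dot, unit_to, pscale, psub; simpl.
  transitivity (((fst P - fst Q) ^ 2 + (snd P - snd Q) ^ 2) / dist P Q ^ 2); [field; lra|].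
  rewrite <- dist_sq; field; lra.
Qed.

Lemma nondegenerate_neq (P Q S : pt) : nondegenerate P Q S -> P <> Q /\ P <> S /\ Q <> S.
Proof.
  unfold nondegenerate, cross, psub; intro h.
  repeat split; intros ->; apply h; simpl; ring.
Qed.

Lemma nondegenerate_rotate (P Q S : pt) : nondegenerate P Q S -> nondegenerate Q S P.
Proof.
  unfold nondegenerate, cross, psub; intros h e; apply h.
  rewrite <- e; simpl; ring.
Qed.

(* The sign conditions rule out the external bisector. *)
Lemma bisector_iff (n P Q S : pt) : n <> (0, 0) -> nondegenerate P Q S ->
  dot n (psub Q P) < 0 -> dot n (psub S P) < 0 ->
  cross n (padd (unit_to P Q) (unit_to P S)) = 0 <->
  dot n (psub Q P) / dist P Q = dot n (psub S P) / dist P S.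
Proof.
  intros hn hnd hQ hS.
  destruct (nondegenerate_neq P Q S hnd) as [nPQ [nPS _]].
  pose proof (dist_pos P Q nPQ) as dQ; pose proof (dist_pos P S nPS) as dS.
  rewrite <- !dot_unit_to.
  assert (hQ' : dot n (unit_to P Q) < 0)
    by (rewrite dot_unit_to; apply Rdiv_neg_pos; assumption).
  assert (hS' : dot n (unit_to P S) < 0)
    by (rewrite dot_unit_to; apply Rdiv_neg_pos; assumption).
  assert (hnn : 0 < dot n n) by (destruct n; apply sum_sq_pos in hn; unfold dot; simpl; lra).
  assert (huv : cross (unit_to P Q) (unit_to P S) <> 0).
  { replace (cross (unit_to P Q) (unit_to P S))
      with (cross (psub Q P) (psub S P) / (dist P Q * dist P S))
      by (unfold cross, unit_to, pscale, psub; simpl; field; lra).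
    apply Rmult_integral_contrapositive; split; [exact hnd | apply Rinv_neq_0_compat; nra]. }
  pose proof (lagrange_identity n (unit_to P Q)) as LQ.
  pose proof (lagrange_identity n (unit_to P S)) as LS.
  rewrite unit_to_norm in LQ, LS by assumption.
  pose proof (dot_cross_identity n (unit_to P Q) (unit_to P S)) as I.
  replace (cross n (padd (unit_to P Q) (unit_to P S)))
    with (cross n (unit_to P Q) + cross n (unit_to P S)) by (unfold cross, padd; simpl; ring).
  set (dq := dot n (unit_to P Q)) in *; set (ds := dot n (unit_to P S)) in *.
  set (cq := cross n (unit_to P Q)) in *; set (cs := cross n (unit_to P S)) in *.
  split; intro h.
  - assert (e : (dq - ds) * (dq + ds) = 0) by (replace cq with (- cs) in LQ by lra; nra).
    apply Rmult_integral in e; lra.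
  - assert (e : (cq - cs) * (cq + cs) = 0) by (rewrite h in LQ; nra).
    apply Rmult_integral in e as [e|e]; [|lra].
    exfalso; apply huv, (Rmult_eq_reg_l (dot n n)); [|lra].
    rewrite I, h; replace cq with cs by lra; ring.
Qed.

Definition on_circle (z : C) : Prop := fst z ^ 2 + snd z ^ 2 = 1.

(* The point of [E] with eccentric anomaly [z]. *)
Definition ell (a b : R) (z : C) : pt := (a * fst z, b * snd z).

Definition gap (z w : C) : R := 1 - dot z w.

Definition re_mul (z w : C) : R := fst z * fst w - snd z * snd w.

Lemma gap_sym (z w : C) : gap z w = gap w z.
Proof. unfold gap, dot; ring. Qed.

Lemma re_mul_sym (z w : C) : re_mul z w = re_mul w z.
Proof. unfold re_mul; ring. Qed.

Lemma gap_conj (z w : C) : gap (Cconj z) (Cconj w) = gap z w.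
Proof. unfold gap, dot, Cconj; simpl; ring. Qed.

Lemma re_mul_conj (z w : C) : re_mul (Cconj z) (Cconj w) = re_mul z w.
Proof. unfold re_mul, Cconj; simpl; ring. Qed.

Lemma on_circle_conj (z : C) : on_circle z -> on_circle (Cconj z).
Proof. unfold on_circle, Cconj; simpl; lra. Qed.

Lemma Cmult_conj_circle (z : C) : on_circle z -> (z * Cconj z)%C = 1.
Proof.
  destruct z as [x y]; unfold on_circle, Cconj, Cmult, RtoC; simpl; intro h.
  f_equal; nsatz_pow.
Qed.

Lemma gap_half_sq (z w : C) : on_circle z -> on_circle w ->
  gap z w = ((fst z - fst w) ^ 2 + (snd z - snd w) ^ 2) / 2.
Proof.
  unfold on_circle, gap, dot; intros; apply (Rmult_eq_reg_r 2); [|lra].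
  unfold Rdiv; rewrite Rmult_assoc, Rinv_l, Rmult_1_r by lra; nsatz_pow.
Qed.

Lemma gap_pos (z w : C) : on_circle z -> on_circle w -> z <> w -> 0 < gap z w.
Proof.
  intros hz hw hzw; rewrite gap_half_sq by assumption.
  enough (0 < (fst z - fst w) ^ 2 + (snd z - snd w) ^ 2) by lra.
  apply sum_sq_pos; intro e; injection e; intros; apply hzw.
  destruct z, w; simpl in *; f_equal; lra.
Qed.

Lemma re_mul_ge (z w : C) : on_circle z -> on_circle w -> -1 <= re_mul z w.
Proof.
  unfold on_circle, re_mul; intros.
  pose proof (pow2_ge_0 (fst z + fst w)); pose proof (pow2_ge_0 (snd z - snd w)); nra.
Qed.

Lemma gap_complex (z w : C) : on_circle z -> on_circle w ->
  RtoC (2 * gap z w) = ((z - w) * (Cconj z - Cconj w))%C.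
Proof.
  destruct z as [x y], w as [x' y']; unfold on_circle, gap, dot, Cconj, Cmult, Cminus, Cplus,
    Copp, RtoC; simpl; intros; f_equal; nsatz_pow.
Qed.

Lemma chord_poly_circle (k h : R) (z w : C) : on_circle z -> on_circle w ->
  chord_poly k h z w = (RtoC (2 - h - 2 * gap z w - 2 * k * re_mul z w) * (z * w))%C.
Proof.
  destruct z as [x y], w as [x' y']; unfold on_circle, chord_poly, gap, dot, re_mul, Cmult,
    Cminus, Cplus, Copp, RtoC; simpl; intros; f_equal; nsatz_pow.
Qed.

Lemma chord_poly_eq0_iff (k h : R) (z w : C) : on_circle z -> on_circle w ->
  chord_poly k h z w = 0%R <-> gap z w + k * re_mul z w = 1 - h / 2.
Proof.
  intros hz hw; rewrite chord_poly_circle by assumption.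
  set (r := 2 - h - 2 * gap z w - 2 * k * re_mul z w).
  split; intro e.
  - assert (r0 : RtoC r = 0%R).
    { assert (u : (z * w * (Cconj z * Cconj w))%C = 1).
      { transitivity ((z * Cconj z) * (w * Cconj w))%C; [ring|].
        rewrite !Cmult_conj_circle by assumption; ring. }
      transitivity (r * (z * w) * (Cconj z * Cconj w))%C.
      - rewrite <- Cmult_assoc, u; ring.
      - rewrite e; ring. }
    apply RtoC_inj in r0; unfold r in r0; lra.
  - replace r with 0 by (unfold r; lra); ring.
Qed.

Lemma cross_circle_sq (z1 z2 z3 : C) : on_circle z1 -> on_circle z2 -> on_circle z3 ->
  cross (psub z2 z1) (psub z3 z1) ^ 2 = 2 * gap z1 z2 * gap z1 z3 * gap z2 z3.
Proof.
  destruct z1, z2, z3; unfold on_circle, cross, psub, gap, dot; simpl; intros; nsatz_pow.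
Qed.

Definition chord_ratio (a b : R) (z w : C) : R := gap z w / dist (ell a b z) (ell a b w).

Definition constant_chord_ratio (a b m : R) (z1 z2 z3 : C) : Prop :=
  chord_ratio a b z2 z3 = m /\ chord_ratio a b z3 z1 = m /\ chord_ratio a b z1 z2 = m.

Section EllipseCoordinates.
Variables a b : R.
Hypotheses (ha : a <> 0) (hb : b <> 0).

Lemma on_ellipse_ell (z : C) : on_ellipse a b (ell a b z) <-> on_circle z.
Proof.
  unfold on_ellipse, on_circle, ell; cbn [fst snd].
  replace ((a * fst z) ^ 2 / a ^ 2) with (fst z ^ 2) by (field; assumption).
  replace ((b * snd z) ^ 2 / b ^ 2) with (snd z ^ 2) by (field; assumption).
  reflexivity.
Qed.

Lemma ell_coords (P : pt) : ell a b (fst P / a, snd P / b) = P.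
Proof. destruct P; unfold ell; simpl; f_equal; field; assumption. Qed.

Lemma ell_inj (z w : C) : ell a b z = ell a b w -> z = w.
Proof.
  destruct z as [x y], w as [x' y']; unfold ell; simpl; intro e; injection e; intros ey ex.
  apply Rmult_eq_reg_l in ex, ey; congruence.
Qed.

Lemma nondegenerate_ell_iff (z1 z2 z3 : C) :
  on_circle z1 -> on_circle z2 -> on_circle z3 ->
  nondegenerate (ell a b z1) (ell a b z2) (ell a b z3) <-> z1 <> z2 /\ z1 <> z3 /\ z2 <> z3.
Proof.
  intros h1 h2 h3; unfold nondegenerate.
  replace (cross (psub (ell a b z2) (ell a b z1)) (psub (ell a b z3) (ell a b z1)))
    with (a * b * cross (psub z2 z1) (psub z3 z1)) by (unfold cross, psub, ell; simpl; ring).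
  split.
  - intro h; apply nondegenerate_neq; intro e; apply h; unfold nondegenerate in e.
    rewrite e; ring.
  - intros (n12 & n13 & n23) e.
    pose proof (cross_circle_sq z1 z2 z3 h1 h2 h3) as sq.
    pose proof (gap_pos z1 z2 h1 h2 n12); pose proof (gap_pos z1 z3 h1 h3 n13);
      pose proof (gap_pos z2 z3 h2 h3 n23).
    apply Rmult_integral in e as [e|e]; [apply Rmult_integral in e; tauto|].
    rewrite e in sq.
    assert (0 < gap z1 z2 * gap z1 z3 * gap z2 z3) by (repeat apply Rmult_lt_0_compat; lra).
    lra.
Qed.

Lemma dist_ell_sq (z w : C) : on_circle z -> on_circle w ->
  dist (ell a b z) (ell a b w) ^ 2 = gap z w * (a ^ 2 + b ^ 2 - (a ^ 2 - b ^ 2) * re_mul z w).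
Proof.
  rewrite dist_sq; destruct z, w; unfold on_circle, ell, gap, dot, re_mul; simpl; intros;
    nsatz_pow.
Qed.

Lemma dist_ell_pos (z w : C) : z <> w -> 0 < dist (ell a b z) (ell a b w).
Proof. intro hzw; apply dist_pos; intro e; apply ell_inj in e; contradiction. Qed.

Lemma chord_ratio_sym (z w : C) : chord_ratio a b z w = chord_ratio a b w z.
Proof. unfold chord_ratio; rewrite gap_sym, dist_sym; reflexivity. Qed.

Lemma chord_ratio_pos (z w : C) : on_circle z -> on_circle w -> z <> w ->
  0 < chord_ratio a b z w.
Proof.
  intros; apply Rdiv_lt_0_compat; [apply gap_pos | apply dist_ell_pos]; assumption.
Qed.

Lemma chord_ratio_eq_iff (m : R) (z w : C) : 0 < m -> on_circle z -> on_circle w -> z <> w ->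
  chord_ratio a b z w = m <->
  gap z w = m ^ 2 * (a ^ 2 + b ^ 2 - (a ^ 2 - b ^ 2) * re_mul z w).
Proof.
  intros hm hz hw hzw; unfold chord_ratio.
  pose proof (dist_ell_pos z w hzw) as hd; pose proof (gap_pos z w hz hw hzw) as hg.
  pose proof (dist_ell_sq z w hz hw) as sq.
  set (d := dist (ell a b z) (ell a b w)) in *.
  set (Z := a ^ 2 + b ^ 2 - (a ^ 2 - b ^ 2) * re_mul z w) in *.
  split; intro e.
  - apply (Rmult_eq_reg_l (gap z w)); [|lra].
    replace (gap z w) with (m * d) at 1 by (rewrite <- e; field; lra).
    replace (m * d * gap z w) with (m ^ 2 * (d ^ 2)) by (rewrite <- e; field; lra).
    rewrite sq; ring.
  - assert (hdg : d = gap z w / m).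
    { apply Rsqr_inj; [lra | apply Rlt_le, Rdiv_lt_0_compat; lra |].
      rewrite !Rsqr_pow2, sq, e; field; lra. }
    rewrite hdg; field; lra.
Qed.

Lemma ell_normal_dot (z w : C) : on_circle z ->
  dot (ell_normal a b (ell a b z)) (psub (ell a b w) (ell a b z)) = - gap z w.
Proof.
  unfold on_circle, ell_normal, ell, gap, dot, psub; cbn [fst snd]; intro h.
  transitivity (fst z * (fst w - fst z) + snd z * (snd w - snd z)); [field; tauto | lra].
Qed.

Lemma ell_normal_neq0 (z : C) : on_circle z -> ell_normal a b (ell a b z) <> (0, 0).
Proof.
  intros h e; pose proof (ell_normal_dot z (Copp z) h) as d.
  rewrite e in d; unfold gap, dot, Copp in d; cbn [fst snd] in d.
  unfold on_circle in h; nra.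
Qed.

Lemma normal_bisects_iff (z q s : C) : on_circle z -> on_circle q -> on_circle s ->
  nondegenerate (ell a b z) (ell a b q) (ell a b s) ->
  normal_bisects a b (ell a b z) (ell a b q) (ell a b s) <->
  chord_ratio a b z q = chord_ratio a b z s.
Proof.
  intros hz hq hs hnd.
  destruct (proj1 (nondegenerate_ell_iff z q s hz hq hs) hnd) as (nzq & nzs & _).
  unfold normal_bisects, chord_ratio.
  rewrite bisector_iff, !ell_normal_dot by
    (try apply ell_normal_neq0; try rewrite ell_normal_dot; try apply Ropp_lt_gt_0_contravar;
     try apply gap_pos; assumption).
  unfold Rdiv; rewrite !Ropp_mult_distr_l_reverse; split; intro; lra.
Qed.

Lemma three_periodic_ell_iff (z1 z2 z3 : C) :
  three_periodic a b (ell a b z1) (ell a b z2) (ell a b z3) <->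
  on_circle z1 /\ on_circle z2 /\ on_circle z3 /\ z1 <> z2 /\ z1 <> z3 /\ z2 <> z3 /\
  exists m, constant_chord_ratio a b m z1 z2 z3.
Proof.
  unfold three_periodic, constant_chord_ratio; rewrite !on_ellipse_ell.
  split.
  - intros (hnd & h1 & h2 & h3 & b1 & b2 & b3).
    pose proof (nondegenerate_rotate _ _ _ hnd) as hnd2.
    rewrite normal_bisects_iff in b1, b2 by assumption.
    rewrite nondegenerate_ell_iff in hnd by assumption.
    rewrite (chord_ratio_sym z2 z1), (chord_ratio_sym z1 z3) in *.
    repeat split; try tauto.
    exists (chord_ratio a b z1 z2); repeat split; congruence.
  - intros (h1 & h2 & h3 & n12 & n13 & n23 & m & e23 & e31 & e12).
    assert (hnd : nondegenerate (ell a b z1) (ell a b z2) (ell a b z3))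
      by (apply nondegenerate_ell_iff; auto).
    pose proof (nondegenerate_rotate _ _ _ hnd) as hnd2.
    pose proof (nondegenerate_rotate _ _ _ hnd2) as hnd3.
    pose proof (chord_ratio_sym z1 z2); pose proof (chord_ratio_sym z2 z3);
      pose proof (chord_ratio_sym z3 z1).
    repeat split; auto; apply normal_bisects_iff; auto; congruence.
Qed.

End EllipseCoordinates.

Section Constants.
Variables a b : R.
Hypotheses (hb : 0 < b) (hab : b < a).

Lemma csq_pos : 0 < a ^ 2 - b ^ 2.
Proof. nra. Qed.

Lemma delta_radicand_pos : 0 < a ^ 4 - a ^ 2 * b ^ 2 + b ^ 4.
Proof.
  assert (0 < a ^ 2 * b ^ 2) by (apply Rmult_lt_0_compat; nra).
  pose proof (pow2_ge_0 (a ^ 2 - b ^ 2)); nra.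
Qed.

Lemma delta_sq : delta a b ^ 2 = a ^ 4 - a ^ 2 * b ^ 2 + b ^ 4.
Proof.
  unfold delta; rewrite <- Rsqr_pow2; apply Rsqr_sqrt.
  apply Rlt_le, delta_radicand_pos.
Qed.

Lemma delta_pos : 0 < delta a b.
Proof. unfold delta; apply sqrt_lt_R0, delta_radicand_pos. Qed.

Lemma k7_delta : k7 a b * (a ^ 2 - b ^ 2) + (a ^ 2 + b ^ 2) = 2 * delta a b.
Proof. pose proof csq_pos; unfold k7, csq; field; lra. Qed.

Lemma k7_root :
  k7 a b ^ 2 * (a ^ 2 - b ^ 2) + 2 * k7 a b * (a ^ 2 + b ^ 2) = 3 * (a ^ 2 - b ^ 2).
Proof.
  pose proof csq_pos; pose proof k7_delta; pose proof delta_sq.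
  apply (Rmult_eq_reg_l (a ^ 2 - b ^ 2)); [|lra]. nra.
Qed.

Lemma k7_pos : 0 < k7 a b.
Proof.
  pose proof csq_pos; pose proof k7_delta; pose proof delta_sq; pose proof delta_pos.
  assert (e : (2 * delta a b - (a ^ 2 + b ^ 2)) * (2 * delta a b + (a ^ 2 + b ^ 2))
              = 3 * (a ^ 2 - b ^ 2) ^ 2).
  { transitivity (4 * delta a b ^ 2 - (a ^ 2 + b ^ 2) ^ 2); [ring | rewrite delta_sq; ring]. }
  assert (0 < 3 * (a ^ 2 - b ^ 2) ^ 2) by nra.
  assert (a ^ 2 + b ^ 2 < 2 * delta a b) by nra.
  nra.
Qed.

Lemma k7_lt_1 : k7 a b < 1.
Proof.
  pose proof csq_pos; pose proof k7_delta; pose proof delta_sq; pose proof delta_pos.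
  assert (e : (delta a b - a ^ 2) * (delta a b + a ^ 2) = - b ^ 2 * (a ^ 2 - b ^ 2))
    by (transitivity (delta a b ^ 2 - a ^ 4); [ring | rewrite delta_sq; ring]).
  assert (0 < b ^ 2 * (a ^ 2 - b ^ 2)) by (apply Rmult_lt_0_compat; nra).
  assert (delta a b < a ^ 2) by nra.
  nra.
Qed.

Lemma k7_unique (k : R) : 0 < k ->
  k ^ 2 * (a ^ 2 - b ^ 2) + 2 * k * (a ^ 2 + b ^ 2) = 3 * (a ^ 2 - b ^ 2) -> k = k7 a b.
Proof.
  intros hk e; pose proof csq_pos; pose proof k7_root; pose proof k7_pos.
  assert (d : (k - k7 a b) * ((a ^ 2 - b ^ 2) * (k + k7 a b) + 2 * (a ^ 2 + b ^ 2)) = 0) by nra.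
  apply Rmult_integral in d as [d|d]; nra.
Qed.

Lemma k2_k7 : k2 a b = / 3 * k7 a b.
Proof. pose proof csq_pos; unfold k2, k7, csq; field; lra. Qed.

Lemma k57_k7 : k57 a b = 4 / (3 + k7 a b ^ 2) * k7 a b.
Proof.
  pose proof k7_root; pose proof k7_delta; pose proof delta_pos; pose proof k7_pos.
  unfold k57, csq.
  apply (Rmult_eq_reg_l (delta a b * (3 + k7 a b ^ 2))); [|nra].
  field_simplify; nra.
Qed.

End Constants.

Definition periodic_triple (k : R) (z1 z2 z3 : C) : Prop :=
  on_circle z1 /\ on_circle z2 /\ on_circle z3 /\ z1 <> z2 /\ z1 <> z3 /\ z2 <> z3 /\
  vieta_triple k z1 z2 z3.

Lemma circle_neq0 (z : C) : on_circle z -> z <> 0%R.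
Proof. unfold on_circle; intros h ->; simpl in h; lra. Qed.

Lemma Cconj_neq (z w : C) : z <> w -> Cconj z <> Cconj w.
Proof. intros hzw e; apply hzw; rewrite <- (Cconj_conj z), e; apply Cconj_conj. Qed.

Lemma chord_poly_conj_eq0 (k h : R) (z w : C) : on_circle z -> on_circle w ->
  chord_poly k h z w = 0%R -> chord_poly k h (Cconj z) (Cconj w) = 0%R.
Proof.
  intros hz hw; rewrite !chord_poly_eq0_iff, gap_conj, re_mul_conj by
    (try apply on_circle_conj; assumption); trivial.
Qed.

Lemma vieta_of_chord_poly (k h : R) (z1 z2 z3 : C) :
  on_circle z1 -> on_circle z2 -> on_circle z3 -> z1 <> z2 -> z1 <> z3 -> z2 <> z3 ->
  chord_poly k h z1 z2 = 0%R -> chord_poly k h z1 z3 = 0%R -> chord_poly k h z2 z3 = 0%R ->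
  vieta_triple k z1 z2 z3 /\ k ^ 2 = 1 + h.
Proof.
  intros h1 h2 h3 n12 n13 n23 c12 c13 c23.
  destruct (chord_poly_vieta k h z1 z2 z3 n12 n13 n23 c12 c13 c23) as [e1 e2h].
  destruct (chord_poly_vieta k h (Cconj z1) (Cconj z2) (Cconj z3)
    (Cconj_neq _ _ n12) (Cconj_neq _ _ n13) (Cconj_neq _ _ n23)
    (chord_poly_conj_eq0 k h z1 z2 h1 h2 c12) (chord_poly_conj_eq0 k h z1 z3 h1 h3 c13)
    (chord_poly_conj_eq0 k h z2 z3 h2 h3 c23)) as [e1' _].
  pose proof (vieta_of_inverses k z1 z2 z3 _ _ _ (Cmult_conj_circle z1 h1)
    (Cmult_conj_circle z2 h2) (Cmult_conj_circle z3 h3) e1') as e2.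
  split; [split; assumption|].
  replace (z1 * z2 + z1 * z3 + z2 * z3)%C with (- RtoC k)%C in e2h
    by (rewrite <- (Cplus_0_l (- RtoC k)), <- e2; ring).
  apply (f_equal fst) in e2h; simpl in e2h; nra.
Qed.

Lemma chord_relation_of_vieta (k : R) (z1 z2 z3 : C) :
  on_circle z1 -> on_circle z2 -> on_circle z3 -> vieta_triple k z1 z2 z3 ->
  gap z1 z2 + k * re_mul z1 z2 = (3 - k ^ 2) / 2 /\
  gap z1 z3 + k * re_mul z1 z3 = (3 - k ^ 2) / 2 /\
  gap z2 z3 + k * re_mul z2 z3 = (3 - k ^ 2) / 2.
Proof.
  intros h1 h2 h3 hv.
  assert (kk : (RtoC k * RtoC k = 1 + RtoC (k ^ 2 - 1))%C)
    by (unfold RtoC, Cmult, Cplus; simpl; f_equal; ring).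
  destruct (vieta_chord_poly k (RtoC (k ^ 2 - 1)) z1 z2 z3 (circle_neq0 z1 h1) (circle_neq0 z2 h2)
    (circle_neq0 z3 h3) hv kk) as (c12 & c13 & c23).
  rewrite chord_poly_eq0_iff in c12, c13, c23 by assumption.
  repeat split; lra.
Qed.

Section VietaCorrespondence.
Variables a b : R.
Hypotheses (hb : 0 < b) (hab : b < a).

Lemma vieta_of_constant_chord_ratio (m : R) (z1 z2 z3 : C) :
  on_circle z1 -> on_circle z2 -> on_circle z3 -> z1 <> z2 -> z1 <> z3 -> z2 <> z3 ->
  constant_chord_ratio a b m z1 z2 z3 -> vieta_triple (k7 a b) z1 z2 z3.
Proof.
  intros h1 h2 h3 n12 n13 n23 (r23 & r31 & r12).
  assert (ha : a <> 0) by lra; assert (hb' : b <> 0) by lra.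
  assert (hm : 0 < m) by (rewrite <- r12; apply chord_ratio_pos; assumption).
  rewrite chord_ratio_sym in r31.
  set (k := m ^ 2 * (a ^ 2 - b ^ 2)); set (h := 2 - 2 * m ^ 2 * (a ^ 2 + b ^ 2)).
  assert (chord : forall z w, on_circle z -> on_circle w -> z <> w ->
            chord_ratio a b z w = m -> chord_poly k h z w = 0%R).
  { intros z w hz hw hzw r.
    apply (chord_ratio_eq_iff a b ha hb' m z w hm hz hw hzw) in r.
    apply chord_poly_eq0_iff; [assumption.. |].
    rewrite r; unfold k, h; field. }
  destruct (vieta_of_chord_poly k h z1 z2 z3) as [hv hk]; auto.
  replace (k7 a b) with k; [assumption|].
  apply k7_unique; [assumption.. | |].
  - unfold k; pose proof (csq_pos a b hb hab); apply Rmult_lt_0_compat; nra.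
  - rewrite hk; unfold k, h; ring.
Qed.

Lemma constant_chord_ratio_of_vieta (z1 z2 z3 : C) :
  periodic_triple (k7 a b) z1 z2 z3 ->
  constant_chord_ratio a b (sqrt (k7 a b / (a ^ 2 - b ^ 2))) z1 z2 z3.
Proof.
  intros (h1 & h2 & h3 & n12 & n13 & n23 & hv).
  assert (ha : a <> 0) by lra; assert (hb' : b <> 0) by lra.
  pose proof (csq_pos a b hb hab) as hc; pose proof (k7_pos a b hb hab) as hk.
  pose proof (k7_root a b hb hab) as hroot.
  set (k := k7 a b) in *; set (m := sqrt (k / (a ^ 2 - b ^ 2))).
  assert (hm : 0 < m) by (apply sqrt_lt_R0, Rdiv_lt_0_compat; assumption).
  assert (hm2 : m ^ 2 = k / (a ^ 2 - b ^ 2))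
    by (unfold m; rewrite <- Rsqr_pow2; apply Rsqr_sqrt, Rlt_le, Rdiv_lt_0_compat; assumption).
  assert (ratio : forall z w, on_circle z -> on_circle w -> z <> w ->
            gap z w + k * re_mul z w = (3 - k ^ 2) / 2 -> chord_ratio a b z w = m).
  { intros z w hz hw hzw e.
    apply (chord_ratio_eq_iff a b ha hb' m z w hm hz hw hzw).
    rewrite hm2; apply (Rmult_eq_reg_l (a ^ 2 - b ^ 2)); [|lra].
    field_simplify; [nra | lra]. }
  destruct (chord_relation_of_vieta k z1 z2 z3 h1 h2 h3 hv) as (c12 & c13 & c23).
  rewrite gap_sym, re_mul_sym in c13.
  repeat split; apply ratio; auto.
Qed.

Lemma three_periodic_iff_periodic_triple (z1 z2 z3 : C) :
  three_periodic a b (ell a b z1) (ell a b z2) (ell a b z3) <-> periodic_triple (k7 a b) z1 z2 z3.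
Proof.
  assert (ha : a <> 0) by lra; assert (hb' : b <> 0) by lra.
  rewrite three_periodic_ell_iff by assumption; split.
  - intros (h1 & h2 & h3 & n12 & n13 & n23 & m & hm).
    repeat split; auto; eapply vieta_of_constant_chord_ratio; eassumption.
  - intro ht; pose proof (constant_chord_ratio_of_vieta z1 z2 z3 ht) as hm.
    destruct ht as (h1 & h2 & h3 & n12 & n13 & n23 & _).
    repeat split; auto; eexists; exact hm.
Qed.

End VietaCorrespondence.

Definition circle_pt (t : R) : C := (cos t, sin t).

Lemma on_circle_pt (t : R) : on_circle (circle_pt t).
Proof. unfold on_circle, circle_pt; cbn [fst snd]; pose proof (sin2_cos2 t); unfold Rsqr in *; lra. Qed.

Lemma circle_pt_add (x y : R) : circle_pt (x + y) = (circle_pt x * circle_pt y)%C.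
Proof. unfold circle_pt, Cmult; cbn [fst snd]; rewrite cos_plus, sin_plus; f_equal; ring. Qed.

Lemma circle_pt_opp (x : R) : circle_pt (- x) = Cconj (circle_pt x).
Proof. unfold circle_pt, Cconj; cbn [fst snd]; rewrite cos_neg, sin_neg; reflexivity. Qed.

Lemma circle_pt_sub_opp (x : R) : (circle_pt x - circle_pt (- x))%C = (0, 2 * sin x).
Proof.
  rewrite circle_pt_opp; unfold circle_pt, Cconj, Cminus, Cplus, Copp; cbn [fst snd].
  f_equal; ring.
Qed.

(* With [u = e^(it)] and [w = e^(ip)], [z = u^2 / w] gives
   [cubic k w z = e^(i(3t - p)) (e^(iA) - e^(-iA) + k (u - 1/u))] for [A = 3t - 2p]. *)
Lemma cubic_circle_pt (k p t : R) :
  cubic k (circle_pt p) (circle_pt (2 * t - p)) =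
  pscale (2 * (sin (3 * t - 2 * p) + k * sin t)) (- sin (3 * t - p), cos (3 * t - p)).
Proof.
  set (u := circle_pt t); set (w := circle_pt p).
  assert (hu : (u * Cconj u)%C = 1) by apply Cmult_conj_circle, on_circle_pt.
  assert (hw : (w * Cconj w)%C = 1) by apply Cmult_conj_circle, on_circle_pt.
  assert (ez : circle_pt (2 * t - p) = (u * u * Cconj w)%C).
  { replace (2 * t - p) with (t + t + - p) by ring; rewrite !circle_pt_add, circle_pt_opp; reflexivity. }
  assert (eq : circle_pt (3 * t - p) = (u * u * u * Cconj w)%C).
  { replace (3 * t - p) with (t + t + t + - p) by ring; rewrite !circle_pt_add, circle_pt_opp; reflexivity. }
  assert (eA : circle_pt (3 * t - 2 * p) = (u * u * u * Cconj w * Cconj w)%C).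
  { replace (3 * t - 2 * p) with (t + t + t + - p + - p) by ring;
      rewrite !circle_pt_add, circle_pt_opp; reflexivity. }
  assert (emA : circle_pt (- (3 * t - 2 * p)) = (Cconj u * Cconj u * Cconj u * w * w)%C).
  { replace (- (3 * t - 2 * p)) with (- t + - t + - t + p + p) by ring;
      rewrite !circle_pt_add, !circle_pt_opp; reflexivity. }
  transitivity (circle_pt (3 * t - p) *
    (circle_pt (3 * t - 2 * p) - circle_pt (- (3 * t - 2 * p))
     + k * (circle_pt t - circle_pt (- t))))%C.
  - rewrite ez, eq, eA, emA, circle_pt_opp; fold u; unfold cubic; nsatz.
  - rewrite !circle_pt_sub_opp; unfold circle_pt, pscale, Cmult, Cplus, RtoC; cbn [fst snd].
    f_equal; ring.
Qed.

Lemma circle_pt_surj (z : C) : on_circle z -> exists p, circle_pt p = z.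
Proof.
  destruct z as [x y]; unfold on_circle, circle_pt; cbn [fst snd]; intro h.
  assert (hx : -1 <= x <= 1) by nra.
  destruct (Rle_dec 0 y) as [hy|hy].
  - exists (acos x); rewrite cos_acos, sin_acos by assumption; f_equal.
    replace (1 - x²) with (y²) by (unfold Rsqr; lra); apply sqrt_Rsqr; assumption.
  - exists (- acos x); rewrite cos_neg, sin_neg, cos_acos, sin_acos by assumption; f_equal.
    replace (1 - x²) with (y²) by (unfold Rsqr; lra); rewrite sqrt_Rsqr_abs, Rabs_left; lra.
Qed.

Lemma circle_pt_double_neq (p t t' : R) : 0 < t' - t < PI ->
  circle_pt (2 * t - p) <> circle_pt (2 * t' - p).
Proof.
  intros ht e; injection e; intros es ec.
  assert (c1 : cos ((2 * t' - p) - (2 * t - p)) = 1).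
  { rewrite cos_minus, <- ec, <- es; pose proof (sin2_cos2 (2 * t - p)); unfold Rsqr in *; lra. }
  replace ((2 * t' - p) - (2 * t - p)) with (2 * (t' - t)) in c1 by ring.
  rewrite cos_2a_sin in c1; pose proof (sin_gt_0 (t' - t)); nra.
Qed.

Lemma sign_change_zero (f : R -> R) (x y : R) : continuity f -> x < y -> f x * f y < 0 ->
  exists r, x < r < y /\ f r = 0.
Proof.
  intros hf hxy hs.
  destruct (IVT_cor f x y hf (Rlt_le _ _ hxy) (Rlt_le _ _ hs)) as (r & [hxr hry] & hr).
  assert (r <> x) by (intros ->; rewrite hr in hs; lra).
  assert (r <> y) by (intros ->; rewrite hr in hs; lra).
  exists r; repeat split; [lra | lra | assumption].
Qed.

Lemma cubic_circle_roots (k : R) (w : C) : 0 < k < 1 -> on_circle w ->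
  exists z1 z2 z3, on_circle z1 /\ on_circle z2 /\ on_circle z3 /\
    z1 <> z2 /\ z1 <> z3 /\ z2 <> z3 /\
    cubic k w z1 = 0%R /\ cubic k w z2 = 0%R /\ cubic k w z3 = 0%R.
Proof.
  intros hk hw; destruct (circle_pt_surj w hw) as [p <-].
  set (f := fun t => sin (3 * t - 2 * p) + k * sin t).
  assert (hf : continuity f) by (unfold f; reg).
  (* at [s n], [sin (3 t - 2 p) = (-1)^n] dominates [k sin t] *)
  set (s := fun n => (PI / 2 + 2 * p + n * PI) / 3).
  assert (fs : forall n, f (s n) = sin (PI / 2 + n * PI) + k * sin (s n))
    by (intro n; unfold f, s;
        replace (3 * ((PI / 2 + 2 * p + n * PI) / 3) - 2 * p) with (PI / 2 + n * PI) by field;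
        reflexivity).
  assert (bound : forall n, - k <= k * sin (s n) <= k)
    by (intro n; pose proof (SIN_bound (s n)); split; nra).
  assert (f0 : 0 < f (s 0)) by (rewrite fs, Rmult_0_l, Rplus_0_r, sin_PI2;
    pose proof (bound 0); lra).
  assert (f1 : f (s 1) < 0) by (rewrite fs, Rmult_1_l, neg_sin, sin_PI2;
    pose proof (bound 1); lra).
  assert (f2 : 0 < f (s 2)) by (rewrite fs; replace (PI / 2 + 2 * PI) with (PI / 2 + PI + PI)
    by ring; rewrite !neg_sin, sin_PI2; pose proof (bound 2); lra).
  assert (f3 : f (s 3) < 0) by (rewrite fs; replace (PI / 2 + 3 * PI) with (PI / 2 + PI + PI + PI)
    by ring; rewrite !neg_sin, sin_PI2; pose proof (bound 3); lra).
  pose proof PI_RGT_0.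
  destruct (sign_change_zero f (s 0) (s 1)) as (r1 & h1 & e1);
    [assumption | unfold s; lra | nra |].
  destruct (sign_change_zero f (s 1) (s 2)) as (r2 & h2 & e2);
    [assumption | unfold s; lra | nra |].
  destruct (sign_change_zero f (s 2) (s 3)) as (r3 & h3 & e3);
    [assumption | unfold s; lra | nra |].
  assert (root : forall r, f r = 0 -> cubic k (circle_pt p) (circle_pt (2 * r - p)) = 0%R).
  { intros r fr; rewrite cubic_circle_pt; unfold f in fr; rewrite fr.
    unfold pscale, RtoC; f_equal; ring. }
  exists (circle_pt (2 * r1 - p)), (circle_pt (2 * r2 - p)), (circle_pt (2 * r3 - p)).
  repeat split; try apply on_circle_pt; try apply circle_pt_double_neq; try apply root;
    try assumption; unfold s in *; lra.
Qed.

Definition wsum (w1 w2 w3 : R) (P1 P2 P3 : pt) : pt :=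
  padd (pscale w1 P1) (padd (pscale w2 P2) (pscale w3 P3)).

Lemma center_ell (a b : R) (h : R -> R -> R -> R) (z1 z2 z3 : C) (c w1 w2 w3 lam : R) :
  let s1 := dist (ell a b z2) (ell a b z3) in
  let s2 := dist (ell a b z3) (ell a b z1) in
  let s3 := dist (ell a b z1) (ell a b z2) in
  c <> 0 -> w1 + w2 + w3 <> 0 ->
  h s1 s2 s3 * s1 = c * w1 -> h s2 s3 s1 * s2 = c * w2 -> h s3 s1 s2 * s3 = c * w3 ->
  wsum w1 w2 w3 z1 z2 z3 = pscale (lam * (w1 + w2 + w3)) (z1 + z2 + z3)%C ->
  center h (ell a b z1) (ell a b z2) (ell a b z3) = ell a b (pscale lam (z1 + z2 + z3)%C).
Proof.
  intros s1 s2 s3 hc hw e1 e2 e3 hsum; unfold center; cbv zeta; fold s1 s2 s3.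
  rewrite e1, e2, e3.
  assert (hcw : c * w1 + c * w2 + c * w3 <> 0)
    by (rewrite <- !Rmult_plus_distr_l; apply Rmult_integral_contrapositive_currified; assumption).
  pose proof (f_equal fst hsum) as hx; pose proof (f_equal snd hsum) as hy.
  unfold wsum, pscale, padd, ell in *; simpl in *; f_equal.
  - transitivity (a * (w1 * fst z1 + (w2 * fst z2 + w3 * fst z3)) / (w1 + w2 + w3));
      [field; split; assumption | rewrite hx; field; assumption].
  - transitivity (b * (w1 * snd z1 + (w2 * snd z2 + w3 * snd z3)) / (w1 + w2 + w3));
      [field; split; assumption | rewrite hy; field; assumption].
Qed.

Lemma dist_of_chord_ratio (a b m : R) (z w : C) : 0 < m -> chord_ratio a b z w = m ->
  dist (ell a b z) (ell a b w) = gap z w / m.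
Proof.
  unfold chord_ratio; intros hm e.
  destruct (Req_dec (dist (ell a b z) (ell a b w)) 0) as [d0|d0].
  - rewrite d0, Rdiv_0_r in e; lra.
  - rewrite <- e; field; split; [assumption|]; intro g0; rewrite g0 in e; unfold Rdiv in e; lra.
Qed.

Lemma re_mul_sum (k : R) (z1 z2 z3 : C) : vieta_triple k z1 z2 z3 ->
  re_mul z1 z2 + re_mul z1 z3 + re_mul z2 z3 = - k.
Proof.
  intros [_ e2]; apply (f_equal fst) in e2; unfold re_mul; simpl in e2; lra.
Qed.

Section Centers.
Variables (a b : R) (z1 z2 z3 : C).
Hypotheses (hb : 0 < b) (hab : b < a) (ht : periodic_triple (k7 a b) z1 z2 z3).

Let g1 := gap z2 z3.
Let g2 := gap z3 z1.
Let g3 := gap z1 z2.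

Let D1 := g2 + g3 - g1.
Let D2 := g3 + g1 - g2.
Let D3 := g1 + g2 - g3.

Lemma gap_triangle_pos : 0 < D1 /\ 0 < D2 /\ 0 < D3.
Proof.
  destruct ht as (h1 & h2 & h3 & _ & _ & _ & hv).
  pose proof (k7_pos a b hb hab); pose proof (k7_lt_1 a b hb hab).
  pose proof (re_mul_sum _ _ _ _ hv) as hs.
  destruct (chord_relation_of_vieta _ _ _ _ h1 h2 h3 hv) as (c12 & c13 & c23).
  pose proof (re_mul_ge z1 z2 h1 h2); pose proof (re_mul_ge z1 z3 h1 h3);
    pose proof (re_mul_ge z2 z3 h2 h3).
  unfold D1, D2, D3, g1, g2, g3; rewrite (gap_sym z3 z1).
  set (k := k7 a b) in *.
  assert (k * re_mul z1 z2 >= - k) by nra; assert (k * re_mul z1 z3 >= - k) by nra;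
    assert (k * re_mul z2 z3 >= - k) by nra.
  repeat split; nra.
Qed.

Lemma side_lengths : exists m, 0 < m /\
  dist (ell a b z2) (ell a b z3) = g1 / m /\ dist (ell a b z3) (ell a b z1) = g2 / m /\
  dist (ell a b z1) (ell a b z2) = g3 / m.
Proof.
  assert (ha : a <> 0) by lra; assert (hb' : b <> 0) by lra.
  pose proof (constant_chord_ratio_of_vieta a b hb hab z1 z2 z3 ht) as (r23 & r31 & r12).
  destruct ht as (h1 & h2 & h3 & n12 & n13 & n23 & _).
  set (m := sqrt (k7 a b / (a ^ 2 - b ^ 2))) in *.
  assert (hm : 0 < m) by (rewrite <- r12; apply chord_ratio_pos; assumption).
  exists m; repeat split; [assumption | ..]; apply dist_of_chord_ratio; assumption.
Qed.

Lemma gergonne_wsum :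
  wsum (D2 * D3) (D1 * D3) (D1 * D2) z1 z2 z3 =
  pscale (1 * (D2 * D3 + D1 * D3 + D1 * D2)) (z1 + z2 + z3)%C.
Proof.
  destruct ht as (h1 & h2 & h3 & _ & _ & _ & hv).
  pose proof (gergonne_identity (k7 a b) z1 z2 z3 (Cconj z1) (Cconj z2) (Cconj z3)
    (RtoC (2 * g1)) (RtoC (2 * g2)) (RtoC (2 * g3)) (Cmult_conj_circle z1 h1)
    (Cmult_conj_circle z2 h2) (Cmult_conj_circle z3 h3) hv (gap_complex z2 z3 h2 h3)
    (gap_complex z3 z1 h3 h1) (gap_complex z1 z2 h1 h2)) as H.
  pose proof (f_equal fst H) as hx; pose proof (f_equal snd H) as hy; clear H.
  unfold Cconj, Cminus, Copp, Cmult, Cplus, RtoC in hx, hy; cbn [fst snd] in hx, hy.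
  unfold wsum, pscale, padd, Cplus, D1, D2, D3; cbn [fst snd]; f_equal; lra.
Qed.

Lemma x57_wsum :
  wsum (g1 * D2 * D3) (g2 * D1 * D3) (g3 * D1 * D2) z1 z2 z3 =
  pscale (4 / (3 + k7 a b ^ 2) * (g1 * D2 * D3 + g2 * D1 * D3 + g3 * D1 * D2))
    (z1 + z2 + z3)%C.
Proof.
  destruct ht as (h1 & h2 & h3 & _ & _ & _ & hv).
  pose proof (x57_identity (k7 a b) z1 z2 z3 (Cconj z1) (Cconj z2) (Cconj z3)
    (RtoC (2 * g1)) (RtoC (2 * g2)) (RtoC (2 * g3)) (Cmult_conj_circle z1 h1)
    (Cmult_conj_circle z2 h2) (Cmult_conj_circle z3 h3) hv (gap_complex z2 z3 h2 h3)
    (gap_complex z3 z1 h3 h1) (gap_complex z1 z2 h1 h2)) as H.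
  pose proof (f_equal fst H) as hx; pose proof (f_equal snd H) as hy; clear H.
  unfold Cconj, Cminus, Copp, Cmult, Cplus, RtoC in hx, hy; cbn [fst snd] in hx, hy.
  assert (hk : 0 < 3 + k7 a b ^ 2) by nra.
  unfold wsum, pscale, padd, Cplus, D1, D2, D3; cbn [fst snd]; f_equal;
    apply (Rmult_eq_reg_l (3 + k7 a b ^ 2)); try lra; field_simplify; lra.
Qed.

Lemma gaps_pos : 0 < g1 /\ 0 < g2 /\ 0 < g3.
Proof.
  destruct ht as (h1 & h2 & h3 & n12 & n13 & n23 & _).
  unfold g1, g2, g3; repeat split; apply gap_pos; auto.
Qed.

Lemma center_h2 :
  center h2 (ell a b z1) (ell a b z2) (ell a b z3) = ell a b (pscale (/ 3) (z1 + z2 + z3)%C).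
Proof.
  destruct side_lengths as (m & hm & s1 & s2 & s3); pose proof gaps_pos.
  apply (center_ell a b h2 z1 z2 z3 1 1 1 1); try lra; unfold h2.
  - rewrite s1; field; split; lra.
  - rewrite s2; field; split; lra.
  - rewrite s3; field; split; lra.
  - unfold wsum, pscale, padd, Cplus; cbn [fst snd]; f_equal; field.
Qed.

Lemma center_h7 :
  center h7 (ell a b z1) (ell a b z2) (ell a b z3) = ell a b (pscale 1 (z1 + z2 + z3)%C).
Proof.
  destruct side_lengths as (m & hm & s1 & s2 & s3); pose proof gaps_pos.
  destruct gap_triangle_pos as (d1 & d2 & d3).
  apply (center_ell a b h7 z1 z2 z3 (m / (D1 * D2 * D3)) (D2 * D3) (D1 * D3) (D1 * D2));
    [| | unfold h7; rewrite s1, s2, s3 .. | exact gergonne_wsum].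
  - apply Rgt_not_eq, Rdiv_lt_0_compat; [|repeat apply Rmult_lt_0_compat]; assumption.
  - apply Rgt_not_eq; repeat apply Rplus_lt_0_compat; repeat apply Rmult_lt_0_compat; lra.
  - replace (g2 / m + g3 / m - g1 / m) with (D1 / m) by (unfold D1; field; lra).
    field; repeat split; lra.
  - replace (g3 / m + g1 / m - g2 / m) with (D2 / m) by (unfold D2; field; lra).
    field; repeat split; lra.
  - replace (g1 / m + g2 / m - g3 / m) with (D3 / m) by (unfold D3; field; lra).
    field; repeat split; lra.
Qed.

Lemma center_h57 :
  center h57 (ell a b z1) (ell a b z2) (ell a b z3) =
  ell a b (pscale (4 / (3 + k7 a b ^ 2)) (z1 + z2 + z3)%C).
Proof.
  destruct side_lengths as (m & hm & s1 & s2 & s3); pose proof gaps_pos.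
  destruct gap_triangle_pos as (d1 & d2 & d3).
  apply (center_ell a b h57 z1 z2 z3 (/ (D1 * D2 * D3))
    (g1 * D2 * D3) (g2 * D1 * D3) (g3 * D1 * D2));
    [| | unfold h57; rewrite s1, s2, s3 .. | exact x57_wsum].
  - apply Rgt_not_eq, Rinv_0_lt_compat; repeat apply Rmult_lt_0_compat; assumption.
  - apply Rgt_not_eq; repeat apply Rplus_lt_0_compat; repeat apply Rmult_lt_0_compat; lra.
  - replace (g2 / m + g3 / m - g1 / m) with (D1 / m) by (unfold D1; field; lra).
    field; repeat split; lra.
  - replace (g3 / m + g1 / m - g2 / m) with (D2 / m) by (unfold D2; field; lra).
    field; repeat split; lra.
  - replace (g1 / m + g2 / m - g3 / m) with (D3 / m) by (unfold D3; field; lra).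
    field; repeat split; lra.
Qed.

End Centers.

Lemma periodic_triple_with_product (k : R) (w : C) : 0 < k < 1 -> on_circle w ->
  exists z1 z2 z3, periodic_triple k z1 z2 z3 /\ (z1 + z2 + z3)%C = pscale (- k) w.
Proof.
  intros hk hw.
  destruct (cubic_circle_roots k w hk hw)
    as (z1 & z2 & z3 & h1 & h2 & h3 & n12 & n13 & n23 & c1 & c2 & c3).
  destruct (cubic_roots_vieta k w z1 z2 z3 n12 n13 n23 c1 c2 c3) as [hv e3].
  exists z1, z2, z3; split; [unfold periodic_triple; tauto|].
  destruct hv as [e1 _]; rewrite e3 in e1.
  apply (f_equal fst) in e1 as ex; apply (f_equal snd) in e1 as ey.
  unfold pscale, Cmult, Cplus, RtoC in *; cbn [fst snd] in *; f_equal; lra.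
Qed.

Lemma periodic_triple_sum_sq (k : R) (z1 z2 z3 : C) : periodic_triple k z1 z2 z3 ->
  fst (z1 + z2 + z3)%C ^ 2 + snd (z1 + z2 + z3)%C ^ 2 = k ^ 2.
Proof.
  intros (h1 & h2 & h3 & _ & _ & _ & [e1 _]).
  apply (f_equal fst) in e1 as ex; apply (f_equal snd) in e1 as ey; clear e1.
  destruct z1, z2, z3; unfold on_circle in *;
    unfold Cmult, Cplus, RtoC in *; cbn [fst snd] in *; nsatz_pow.
Qed.

Lemma on_scaled_ellipse_ell (a b k lam : R) (u : C) : a <> 0 -> b <> 0 -> k <> 0 -> lam <> 0 ->
  on_scaled_ellipse (lam * k) a b (ell a b (pscale lam u)) <-> fst u ^ 2 + snd u ^ 2 = k ^ 2.
Proof.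
  intros ha hb hk hl; unfold on_scaled_ellipse, ell, pscale; cbn [fst snd].
  replace ((a * (lam * fst u)) ^ 2 / (lam * k * a) ^ 2 + (b * (lam * snd u)) ^ 2 / (lam * k * b) ^ 2)
    with ((fst u ^ 2 + snd u ^ 2) / k ^ 2) by (field; repeat split; assumption).
  split; intro e.
  - apply (Rmult_eq_reg_r (/ k ^ 2)); [rewrite Rinv_r; [exact e|] | apply Rinv_neq_0_compat];
      apply pow_nonzero; assumption.
  - rewrite e; field; assumption.
Qed.

Lemma locus_scaled_ellipse (a b : R) (h : R -> R -> R -> R) (lam : R) :
  0 < b -> b < a -> 0 < lam ->
  (forall z1 z2 z3, periodic_triple (k7 a b) z1 z2 z3 ->
     center h (ell a b z1) (ell a b z2) (ell a b z3) = ell a b (pscale lam (z1 + z2 + z3)%C)) ->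
  forall X, in_locus a b h X <-> on_scaled_ellipse (lam * k7 a b) a b X.
Proof.
  intros hb hab hl hc X.
  assert (ha : a <> 0) by lra; assert (hb' : b <> 0) by lra.
  pose proof (k7_pos a b hb hab) as hk; pose proof (k7_lt_1 a b hb hab).
  split.
  - intros (P1 & P2 & P3 & hp & <-).
    rewrite <- (ell_coords a b ha hb' P1), <- (ell_coords a b ha hb' P2),
      <- (ell_coords a b ha hb' P3) in hp |- *.
    apply three_periodic_iff_periodic_triple in hp; [|assumption..].
    rewrite hc by assumption.
    apply on_scaled_ellipse_ell; try lra.
    apply (periodic_triple_sum_sq _ _ _ _ hp).
  - intro hX.
    set (u := pscale (/ lam) (fst X / a, snd X / b)).
    assert (hXu : ell a b (pscale lam u) = X).
    { unfold u, pscale, ell; cbn [fst snd]; destruct X; cbn [fst snd].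
      f_equal; field; split; lra. }
    rewrite <- hXu in hX; apply on_scaled_ellipse_ell in hX; try lra.
    destruct (periodic_triple_with_product (k7 a b) (pscale (- / k7 a b) u))
      as (z1 & z2 & z3 & ht & hs); [lra | |].
    { unfold on_circle, pscale; cbn [fst snd].
      replace 1 with ((fst u ^ 2 + snd u ^ 2) / k7 a b ^ 2) by (rewrite hX; field; lra).
      field; lra. }
    exists (ell a b z1), (ell a b z2), (ell a b z3); split.
    + apply three_periodic_iff_periodic_triple; assumption.
    + rewrite hc, hs, <- hXu by assumption; unfold pscale; cbn [fst snd].
      f_equal; f_equal; field; lra.
Qed.

Theorem theorem1 (a b : R) (hb : 0 < b) (hab : b < a) :
  (forall X : pt, in_locus a b h2 X <-> on_scaled_ellipse (k2 a b) a b X) /\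
  (forall X : pt, in_locus a b h7 X <-> on_scaled_ellipse (k7 a b) a b X) /\
  (forall X : pt, in_locus a b h57 X <-> on_scaled_ellipse (k57 a b) a b X).
Proof.
  pose proof (k7_pos a b hb hab) as hk.
  split; [|split].
  - rewrite (k2_k7 a b hb hab).
    apply locus_scaled_ellipse; [assumption.. | lra |].
    intros; apply center_h2; assumption.
  - rewrite <- (Rmult_1_l (k7 a b)).
    apply locus_scaled_ellipse; [assumption.. | lra |].
    intros; apply center_h7; assumption.
  - rewrite (k57_k7 a b hb hab).
    apply locus_scaled_ellipse; [assumption.. | apply Rdiv_lt_0_compat; nra |].
    intros; apply center_h57; assumption.
Qed.
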